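(* There is an absolute constant $c>0$ such that for every comparison-based search algorithm $A$ (deterministic or randomized) that takes a predicted distribution $\hat p$ on $[n]$ and a target key and locates the target among sorted keys $a_1<\dots<a_n$, and for every $n\ge1$, every $h\in[0,\log n]$ and every $\eta\in[1,n]$: the supremum of the expected number of comparisons made by $A$, taken over all instances $(p,\hat p)$ of distributions on $[n]$ with $H(p)\le h$ and earth mover's distance between $p$ and $\hat p$ at most $\eta$ (target $a=a_i$ drawn with probability $p_i$), is at least $c\,(h+\log\eta)$. In particular, the worst-case expected query complexity of any such algorithm is $\Omega(H(p)+\log\eta)$.
   Context: All logarithms are base 2. $H(p)=-\sum_i p_i\log p_i$ is the entropy. The earth mover's distance between distributions $P,Q$ on $[n]$ is $\inf_{\gamma\in\Pi(P,Q)}\mathbb{E}_{(x,y)\sim\gamma}|x-y|$, with $\Pi(P,Q)$ the set of couplings of $P$ and $Q$. A comparison of the target $a$ with a key $a_j$ returns whether $a<a_j$, $a=a_j$ or $a>a_j$ and counts as one query. (The paper combines its lower bound $\Omega(\log\eta)$ for instances with $H(p)=0$ with the known fact that any comparison-based search needs $\Omega(H(p))$ expected comparisons even when $\hat p=p$.) *)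

From HB Require Import structures.
From mathcomp Require Import all_boot all_order all_algebra.
From mathcomp Require Import all_classical all_reals.
From mathcomp Require Import ereal sequences exp.
From mathcomp Require Import Rstruct.


Set Implicit Arguments.
Unset Strict Implicit.
Unset Printing Implicit Defensive.

Import Order.TTheory GRing.Theory Num.Theory.
Local Open Scope ring_scope.
Local Open Scope classical_set_scope.

Notation R := Rdefinitions.R.

Definition log2 (x : R) : R := ln x / ln 2.

Definition is_distr (n : nat) (p : 'I_n -> R) : Prop :=
  (forall i, 0 <= p i) /\ \sum_(i < n) p i = 1.

(** Shannon entropy (base 2), H(p) = - sum_i p_i log p_i (with 0 log 0 = 0:
    the term p_i * log p_i is 0 when p_i = 0). *)
Definition entropy (n : nat) (p : 'I_n -> R) : R :=
  - \sum_(i < n) p i * log2 (p i).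

(** Couplings of P and Q on [n] x [n]. Index i : 'I_n stands for the
    point i+1 of [n]; distances |x - y| are unaffected by the shift. *)
Definition coupling (n : nat) (P Q : 'I_n -> R) (g : 'I_n -> 'I_n -> R) : Prop :=
  (forall x y, 0 <= g x y) /\
  (forall x, \sum_(y < n) g x y = P x) /\
  (forall y, \sum_(x < n) g x y = Q y).

Definition emd (n : nat) (P Q : 'I_n -> R) : R :=
  inf [set e : R | exists g, coupling P Q g /\
         e = \sum_(x < n) \sum_(y < n) g x y * `| (x%:R : R) - (y%:R : R) |].

(** Deterministic comparison-based search algorithms on the sorted keys
    a_1 < ... < a_n, as ternary comparison (decision) trees.  Since the
    algorithm only accesses the target through comparisons with keys, the
    target a = a_i is represented by its index i.
    [Query j tlt teq tgt] compares the target with key a_j and continues in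
    tlt / teq / tgt according to whether a < a_j, a = a_j, a > a_j.
    [Answer i] stops and reports that the target is a_i. *)
Inductive ctree (n : nat) : Type :=
| Answer : 'I_n -> ctree n
| Query : 'I_n -> ctree n -> ctree n -> ctree n -> ctree n.

Arguments Answer {n}.
Arguments Query {n}.

Fixpoint output (n : nat) (t : ctree n) (i : 'I_n) : 'I_n :=
  match t with
  | Answer j => j
  | Query j tl te tg =>
      if (nat_of_ord i < nat_of_ord j)%N then output tl i else if i == j then output te i
      else output tg i
  end.

Fixpoint ncomp (n : nat) (t : ctree n) (i : 'I_n) : nat :=
  match t with
  | Answer _ => 0%N
  | Query j tl te tg =>
      (if (nat_of_ord i < nat_of_ord j)%N then ncomp tl i else if i == j then ncomp te i
       else ncomp tg i).+1
  end.

Definition correct (n : nat) (t : ctree n) : Prop := forall i, output t i = i.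

(** A randomized algorithm (given a fixed prediction) is a probability
    distribution, with countable support, over deterministic comparison
    trees: tree [tree k] is used with probability [weight k]. Deterministic algorithms are
    the special case of a point mass. *)
Record rand_search (n : nat) := RandSearch {
  tree : nat -> ctree n;
  weight : nat -> R;
  weight_ge0 : forall k, 0 <= weight k;
  weight_sum1 : (\sum_(k <oo) (weight k)%:E)%E = 1%E;
  tree_correct : forall k, 0 < weight k -> correct (tree k)
}.

Definition pred_search (n : nat) := ('I_n -> R) -> rand_search n.

(** Expected number of comparisons of A on instance (p, phat): the target
    a = a_i is drawn with probability p_i, independently of A's coins.
    Valued in the extended reals (it may be +oo). *)
Definition exp_cost (n : nat) (A : pred_search n) (p phat : 'I_n -> R) : \bar R :=
  (\sum_(k <oo)
     ((weight (A phat) k * \sum_(i < n) p i * (ncomp (tree (A phat) k) i)%:R)%:E))%E.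

Definition worst_exp_cost (n : nat) (A : pred_search n) (h eta : R) : \bar R :=
  ereal_sup [set c : \bar R | exists p phat : 'I_n -> R,
     [/\ is_distr p, is_distr phat, entropy p <= h, emd p phat <= eta &
         c = exp_cost A p phat]].

(* A comparison tree branches three ways, so it resolves at most 3 ^ d targets
   with fewer than d comparisons; hence on any m targets a correct tree spends
   on average at least (log2 m) / 8 comparisons, and so does any randomized
   algorithm, whose coins are independent of the target.  The entropy term is
   witnessed by p = phat uniform on 2 ^ floor h keys (entropy floor h, EMD 0).
   For the prediction-error term let phat be uniform on the first floor eta
   keys: averaging over the point masses p on these keys (entropy 0, EMD at most
   eta) shows that one of them costs at least (log2 (floor eta)) / 8.  When
   n >= 2 every instance costs at least one comparison, which absorbs the
   losses from rounding h and eta down. *)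

From HB Require Import structures.
From mathcomp Require Import all_boot all_order all_algebra.
From mathcomp Require Import all_classical all_reals.
From mathcomp Require Import ereal sequences exp.
From mathcomp Require Import Rstruct.
From mathcomp Require Import zify lra.
Import Order.TTheory GRing.Theory Num.Theory.
Local Open Scope ring_scope.

Lemma ln2_gt0 : 0 < ln (2 : R).
Proof. by rewrite ln_gt0 // ltr1n. Qed.

Lemma log2_1 : log2 1 = 0.
Proof. by rewrite /log2 ln1 mul0r. Qed.

Lemma log2_ge0 (x : R) : 1 <= x -> 0 <= log2 x.
Proof. by move=> x_ge1; exact: divr_ge0 (ln_ge0 x_ge1) (ltW ln2_gt0). Qed.

Lemma ler_log2 (x y : R) : 0 < x -> 0 < y -> (log2 x <= log2 y) = (x <= y).
Proof. by move=> x_gt0 y_gt0; rewrite ler_pM2r ?invr_gt0 ?ln2_gt0 // ler_ln. Qed.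

Lemma log2M (x y : R) : 0 < x -> 0 < y -> log2 (x * y) = log2 x + log2 y.
Proof. by move=> x_gt0 y_gt0; rewrite /log2 lnM // mulrDl. Qed.

Lemma log2_expr (k : nat) : log2 (2 ^+ k) = k%:R.
Proof.
by rewrite /log2 lnXn // -[ln 2 *+ k]mulr_natr mulrAC divff ?mul1r // gt_eqF // ln2_gt0.
Qed.

Lemma log2_natr_le_trunc_log (m : nat) : (0 < m)%N -> log2 m%:R <= (trunc_log 2 m).+1%:R.
Proof.
move=> m_gt0; rewrite -[_.+1%:R]log2_expr ler_log2 ?ltr0n ?exprn_gt0 // -natrX ler_nat.
exact/ltnW/trunc_log_ltn.
Qed.

Lemma log2_le_log2_truncn (x : R) : 1 <= x -> log2 x <= 1 + log2 (Num.truncn x)%:R.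
Proof.
move=> x_ge1; have x_ge0 : 0 <= x := le_trans ler01 x_ge1.
have m_gt0 : (0 < Num.truncn x)%N by rewrite truncn_gt0.
have /andP[_ x_lt] := truncn_itv x_ge0.
have -> : 1 + log2 (Num.truncn x)%:R = log2 (2 * (Num.truncn x)%:R).
  by rewrite log2M ?ltr0n // /log2 divff // gt_eqF // ln2_gt0.
rewrite ler_log2 ?mulr_gt0 ?ltr0n ?(lt_le_trans ltr01) //.
by rewrite -natrM (le_trans (ltW x_lt)) // ler_nat; lia.
Qed.

Section ComparisonTrees.
Context {n : nat}.
Implicit Types (t : ctree n) (S : {set 'I_n}).

Definition resolved_within t d : {set 'I_n} :=
  [set i | (output t i == i) && (ncomp t i < d)%N].

Lemma card_resolved_within t d : (#|resolved_within t d| <= 3 ^ d)%N.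
Proof.
elim: t d => [j|j tl IHl te IHe tg IHg] d.
  rewrite (@leq_trans 1) ?expn_gt0 // -(cards1 j) subset_leq_card //.
  by apply/fintype.subsetP => i; rewrite !inE /= => /andP[/eqP <- _].
case: d => [|d].
  rewrite (_ : resolved_within _ _ = finset.set0) ?cards0 //.
  by apply/setP => i; rewrite !inE ltn0 andbF.
set Rl := resolved_within tl d; set Re := resolved_within te d; set Rg := resolved_within tg d.
have sub : resolved_within (Query j tl te tg) d.+1 \subset Rl :|: Re :|: Rg.
  apply/fintype.subsetP => i; rewrite !inE /=.
  case: ifP => _; first by move=> ->.
  by case: ifP => _ ->; rewrite ?orbT.
apply: leq_trans (subset_leq_card sub) _.
apply: leq_trans (leq_card_setU _ _) _; rewrite expnS mulSn mul2n -addnn addnA.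
apply: leq_add (IHg d); apply: leq_trans (leq_card_setU _ _) _.
exact: leq_add (IHl d) (IHe d).
Qed.

Lemma ncomp_gt0 t i : (1 < n)%N -> correct t -> (0 < ncomp t i)%N.
Proof.
case: t => [j|//] n_gt1 /= Ct.
have n_gt0 : (0 < n)%N by apply: ltnW.
by have := congr1 val (etrans (esym (Ct (Ordinal n_gt1))) (Ct (Ordinal n_gt0))).
Qed.

Lemma card_le_sum_ncomp t S : (1 < n)%N -> correct t -> (#|S| <= \sum_(i in S) ncomp t i)%N.
Proof.
by move=> n_gt1 Ct; rewrite -sum1_card leq_sum // => i _; apply: ncomp_gt0.
Qed.

Lemma depth_mul_card_le_sum_ncomp t S d : correct t ->
  (d * (#|S| - 3 ^ d) <= \sum_(i in S) ncomp t i)%N.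
Proof.
move=> Ct; set F := resolved_within t d.
have cardSF : (#|S| - 3 ^ d <= #|S :\: F|)%N.
  rewrite cardsD leq_sub2l // (leq_trans _ (card_resolved_within t d)) //.
  by rewrite subset_leq_card // subsetIr.
rewrite (big_setID F) /= (leq_trans _ (leq_addl _ _)) //.
apply: leq_trans (leq_mul (leqnn d) cardSF) _.
rewrite mulnC -sum_nat_const leq_sum // => i.
by rewrite !inE Ct eqxx /= => /andP[]; rewrite -leqNgt.
Qed.

Lemma log_mul_card_le_sum_ncomp t S : (2 <= #|S|)%N -> correct t ->
  ((trunc_log 2 #|S|).+1 * #|S| <= 8 * \sum_(i in S) ncomp t i)%N.
Proof.
move=> S_ge2 Ct; set m := #|S|; set k := trunc_log 2 m.
have n_gt1 : (1 < n)%N.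
  by apply: leq_trans S_ge2 _; rewrite -[X in (_ <= X)%N]card_ord max_card.
have m_le_sum := card_le_sum_ncomp t S n_gt1 Ct.
have [k_le7|k_ge8] := leqP k 7.
  apply: (@leq_trans (8 * m)); first by rewrite leq_mul2r ltnS k_le7 orbT.
  by rewrite leq_mul2l m_le_sum orbT.
(* For d = (k - 1) / 2, at most 3 ^ d <= m / 2 targets of S are resolved
   with fewer than d comparisons, and k + 1 <= 4 d. *)
set d := (k.-1 %/ 2)%N.
have pow2k : (2 ^ k <= m)%N by apply: trunc_logP; lia.
have three_pow : (2 * 3 ^ d <= m)%N.
  apply: leq_trans pow2k; rewrite -(prednK (leq_ltn_trans (leq0n 7) k_ge8)) expnS leq_mul2l /=.
  have pow34 e : (3 ^ e <= 4 ^ e)%N by elim: e => // e IH; rewrite !expnS leq_mul.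
  apply: leq_trans (pow34 d) _; rewrite -[4%N]/(2 ^ 2)%N -expnM leq_pexp2l //.
  by rewrite /d mulnC leq_trunc_div.
have := depth_mul_card_le_sum_ncomp t S d Ct.
rewrite -/m => hd; nia.
Qed.

Lemma card_mul_log2_le_sum_ncomp t S :
  (0 < #|S|)%N -> correct t ->
  #|S|%:R * (log2 #|S|%:R / 8) <= (\sum_(i in S) ncomp t i)%:R.
Proof.
move=> S_gt0 Ct; have [S_le1|S_ge2] := leqP #|S| 1.
  by rewrite (@anti_leq #|S| 1) ?S_le1 // log2_1 mul0r mulr0.
have := log_mul_card_le_sum_ncomp t S S_ge2 Ct; rewrite -(ler_nat R) !natrM => key.
rewrite mulrA mulrC ler_pdivrMl // (le_trans _ key) // mulrC.
exact/ler_wpM2r/log2_natr_le_trunc_log.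
Qed.

End ComparisonTrees.

Section Instances.
Context {n : nat}.
Implicit Types (j : 'I_n) (S : {set 'I_n}) (F : 'I_n -> R).

Definition point_mass j : 'I_n -> R := fun i => (i == j)%:R.

Definition uniform_on S : 'I_n -> R := fun i => if i \in S then #|S|%:R^-1 else 0.

Definition prefix (m : nat) : {set 'I_n} := [set i : 'I_n | (i < m)%N].

Lemma sum_point_mass j F : \sum_(i < n) point_mass j i * F i = F j.
Proof.
rewrite (bigD1 j) //= /point_mass eqxx mul1r big1 ?addr0 // => i /negbTE ->.
by rewrite mul0r.
Qed.

Lemma sum_uniform_on S F :
  \sum_(i < n) uniform_on S i * F i = #|S|%:R^-1 * \sum_(i in S) F i.
Proof.
rewrite mulr_sumr [RHS]big_mkcond; apply: eq_bigr => i _; rewrite /uniform_on.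
by case: ifP => _; rewrite ?mul0r.
Qed.

Lemma card_prefix m : (m <= n)%N -> #|prefix m| = m.
Proof.
move=> m_le_n; rewrite -sum1_card (eq_bigl (fun i : 'I_n => (i < m)%N)) => [|i].
  by rewrite (big_ord_narrow m_le_n) sum1_card card_ord.
by rewrite inE.
Qed.

Lemma point_mass_distr j : is_distr (point_mass j).
Proof.
split=> [i|]; first exact: ler0n.
by rewrite -(sum_point_mass j (fun=> 1)); apply: eq_bigr => i _; rewrite mulr1.
Qed.

Lemma uniform_on_distr S : (0 < #|S|)%N -> is_distr (uniform_on S).
Proof.
move=> S_gt0; split=> [i|]; first by rewrite /uniform_on; case: ifP; rewrite ?invr_ge0.
rewrite (eq_bigr (fun i => uniform_on S i * 1)) => [|i _]; last by rewrite mulr1.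
by rewrite sum_uniform_on sumr_const mulVf // pnatr_eq0 -lt0n.
Qed.

Lemma entropy_point_mass j : entropy (point_mass j) = 0.
Proof. by rewrite /entropy sum_point_mass /point_mass eqxx log2_1 oppr0. Qed.

Lemma entropy_uniform_on S : (0 < #|S|)%N -> entropy (uniform_on S) = log2 #|S|%:R.
Proof.
move=> S_gt0; have S_pos : (0 : R) < #|S|%:R by rewrite ltr0n.
rewrite /entropy (eq_bigr (fun i => uniform_on S i * log2 #|S|%:R^-1)) => [|i _]; last first.
  by rewrite /uniform_on; case: ifP; rewrite ?mul0r.
rewrite sum_uniform_on sumr_const -[log2 _ *+ _]mulr_natr mulrCA mulVf ?gt_eqF // mulr1.
by rewrite /log2 lnV ?posrE // mulNr opprK.
Qed.

Lemma emd_le_coupling (P Q : 'I_n -> R) g e : coupling P Q g ->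
  \sum_(x < n) \sum_(y < n) g x y * `|x%:R - y%:R| <= e -> emd P Q <= e.
Proof.
move=> gPQ g_cost; apply: le_trans g_cost; apply: ge_inf; last by exists g.
exists 0 => _ [g' [[g'_ge0 _] ->]].
by apply: sumr_ge0 => x _; apply: sumr_ge0 => y _; rewrite mulr_ge0.
Qed.

Lemma emd_self_le0 (p : 'I_n -> R) : (forall i, 0 <= p i) -> emd p p <= 0.
Proof.
move=> p_ge0; apply: (@emd_le_coupling _ _ (fun x y => (x == y)%:R * p x)).
  split=> [x y|]; first by rewrite mulr_ge0.
  split=> [x|y].
    rewrite (eq_bigr (fun y => point_mass x y * p x)) ?sum_point_mass // => y _.
    by rewrite /point_mass eq_sym.
  by rewrite (eq_bigr (fun x => point_mass y x * p x)) ?sum_point_mass.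
rewrite big1 // => x _; rewrite big1 // => y _.
by have [->|] := eqVneq x y; rewrite ?subrr ?normr0 ?mulr0 ?mul0r.
Qed.

Lemma emd_point_mass_le j (q : 'I_n -> R) (eta : R) : is_distr q ->
  (forall y, q y != 0 -> `|j%:R - y%:R| <= eta) -> emd (point_mass j) q <= eta.
Proof.
move=> [q_ge0 q_sum1] q_near; apply: (@emd_le_coupling _ _ (fun x y => point_mass j x * q y)).
  split=> [x y|]; first by rewrite mulr_ge0 ?ler0n.
  by split=> [x|y]; rewrite ?sum_point_mass // -mulr_sumr q_sum1 mulr1.
rewrite (eq_bigr (fun x => point_mass j x * \sum_(y < n) q y * `|x%:R - y%:R|))
  => [|x _]; last first.
  by rewrite mulr_sumr; apply: eq_bigr => y _; rewrite mulrA.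
rewrite sum_point_mass (@le_trans _ _ (\sum_(y < n) q y * eta)) //; last first.
  by rewrite -mulr_suml q_sum1 mul1r.
apply: ler_sum => y _; have [->|q_y] := eqVneq (q y) 0; first by rewrite !mul0r.
by rewrite ler_wpM2l ?q_near.
Qed.

Lemma emd_point_mass_uniform_prefix j m (eta : R) : (0 < m <= n)%N -> (j < m)%N ->
  m%:R <= eta -> emd (point_mass j) (uniform_on (prefix m)) <= eta.
Proof.
move=> /andP[m_gt0 m_le_n] j_lt_m m_le_eta.
apply: emd_point_mass_le => [|y]; first by apply: uniform_on_distr; rewrite card_prefix.
rewrite /uniform_on inE; case: ifP => [y_lt_m _|]; last by rewrite eqxx.
apply: le_trans m_le_eta; rewrite ler_norml.
have := ltnW j_lt_m; have := ltnW y_lt_m; rewrite -!(ler_nat R).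
have := ler0n R j; have := ler0n R y; move=> *; apply/andP; split; lra.
Qed.

End Instances.

Section ExpectedCost.
Local Open Scope ereal_scope.

Lemma exists_ge_of_card_mul_le_sum (I : finType) (S : {set I}) (f : I -> \bar R) (x : \bar R) :
  (0 < #|S|)%N -> #|S|%:R%:E * x <= \sum_(j in S) f j -> exists2 j, j \in S & x <= f j.
Proof.
move=> S_gt0 x_le_sum; have /card_gt0P[i0 i0S] := S_gt0.
have [jm jmS jm_max] := arg_maxP f i0S.
exists jm => //; rewrite -(@lee_pmul2l _ #|S|%:R%:E) ?lte_fin ?ltr0n //.
apply: le_trans x_le_sum _; rewrite mule_natl.
have <- : \sum_(j in S) f jm = f jm *+ #|S| by rewrite sumr_const.
by apply: lee_sum => j; exact: jm_max.
Qed.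

Context {n : nat}.
Implicit Types (A : pred_search n) (p phat : 'I_n -> R) (S : {set 'I_n}) (j : 'I_n).

Lemma eseries_weight_mul (B : rand_search n) (L : R) : (0 <= L)%R ->
  \sum_(k <oo) (weight B k * L)%:E = L%:E.
Proof.
move=> L_ge0; under eq_eseriesr do rewrite mulrC EFinM.
by rewrite nneseriesZl => [|k _]; rewrite ?weight_sum1 ?mule1 ?lee_fin ?weight_ge0.
Qed.

Lemma exp_cost_ge A p phat (L : R) : (0 <= L)%R ->
  (forall t, correct t -> L <= \sum_(i < n) p i * (ncomp t i)%:R)%R ->
  L%:E <= exp_cost A p phat.
Proof.
move=> L_ge0 L_le; rewrite /exp_cost -(eseries_weight_mul (A phat) L L_ge0).
apply: lee_nneseries => [k _ _|k _]; first by rewrite lee_fin mulr_ge0 ?weight_ge0.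
rewrite lee_fin; have [w0|w_gt0] := eqVneq (weight (A phat) k) 0%R; first by rewrite w0 !mul0r.
rewrite ler_wpM2l ?weight_ge0 // L_le //; apply: tree_correct.
by rewrite lt0r w_gt0 weight_ge0.
Qed.

Lemma exp_cost_uniform_on_ge A S phat : (0 < #|S|)%N ->
  (log2 #|S|%:R / 8)%:E <= exp_cost A (uniform_on S) phat.
Proof.
move=> S_gt0; apply: exp_cost_ge => [|t Ct].
  by rewrite divr_ge0 ?log2_ge0 ?ler1n.
rewrite sum_uniform_on -natr_sum ler_pdivlMl ?ltr0n //.
exact: card_mul_log2_le_sum_ncomp.
Qed.

Lemma exp_cost_point_mass_ge1 A j phat : (1 < n)%N -> 1 <= exp_cost A (point_mass j) phat.
Proof.
move=> n_gt1; apply: exp_cost_ge => // t Ct.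
by rewrite (sum_point_mass j (fun i => (ncomp t i)%:R)) ler1n ncomp_gt0.
Qed.

Lemma sum_exp_cost_point_mass A S phat : (0 < #|S|)%N ->
  \sum_(j in S) exp_cost A (point_mass j) phat = #|S|%:R%:E * exp_cost A (uniform_on S) phat.
Proof.
move=> S_gt0; pose w := weight (A phat); pose c k i := (ncomp (tree (A phat) k) i)%:R : R.
have -> : \sum_(j in S) exp_cost A (point_mass j) phat =
    \sum_(j in S) \sum_(k <oo) (w k * c k j)%:E.
  by apply: eq_bigr => j _; apply: eq_eseriesr => k _; rewrite (sum_point_mass j (c k)).
rewrite -nneseries_sum => [|j k _]; last by rewrite lee_fin mulr_ge0 ?weight_ge0.
rewrite /exp_cost -nneseriesZl => [|k _]; last first.
  have [u_ge0 _] := uniform_on_distr S S_gt0.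
  by rewrite lee_fin mulr_ge0 ?weight_ge0 // sumr_ge0 // => i _; rewrite mulr_ge0 ?u_ge0.
apply: eq_eseriesr => k _; rewrite sumEFin -EFinM sum_uniform_on mulrCA !mulrA.
by rewrite mulfK ?pnatr_eq0 -?lt0n // mulr_sumr.
Qed.

Lemma exists_exp_cost_point_mass_ge A S phat : (0 < #|S|)%N ->
  exists2 j, j \in S & (log2 #|S|%:R / 8)%:E <= exp_cost A (point_mass j) phat.
Proof.
move=> S_gt0; apply: exists_ge_of_card_mul_le_sum => //.
rewrite sum_exp_cost_point_mass // lee_wpmul2l ?lee_fin //.
exact: exp_cost_uniform_on_ge.
Qed.

End ExpectedCost.

Section WorstCase.
Local Open Scope ereal_scope.
Context {n : nat} (A : pred_search n) (h eta : R).

Lemma exp_cost_le_worst p phat : is_distr p -> is_distr phat ->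
  (entropy p <= h)%R -> (emd p phat <= eta)%R -> exp_cost A p phat <= worst_exp_cost A h eta.
Proof. by move=> p_distr phat_distr p_h p_eta; apply: ereal_sup_ubound; exists p, phat. Qed.

Lemma worst_exp_cost_ge_entropy : (0 < n)%N -> (0 <= h <= log2 n%:R)%R -> (0 <= eta)%R ->
  ((Num.truncn h)%:R / 8)%:E <= worst_exp_cost A h eta.
Proof.
move=> n_gt0 /andP[h_ge0 h_le] eta_ge0.
set k := Num.truncn h; set S : {set 'I_n} := prefix (2 ^ k).
have k_le_h : (k%:R <= h)%R by rewrite truncn_le.
have pow_le_n : (2 ^ k <= n)%N.
  rewrite -(ler_nat R) natrX -ler_log2 ?exprn_gt0 ?ltr0n // log2_expr.
  exact: le_trans k_le_h h_le.
have card_S : #|S| = (2 ^ k)%N by rewrite card_prefix.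
have S_gt0 : (0 < #|S|)%N by rewrite card_S expn_gt0.
have [u_ge0 _] := uniform_on_distr S S_gt0.
have := exp_cost_uniform_on_ge A S (uniform_on S) S_gt0.
rewrite card_S natrX log2_expr => cost_S.
apply: le_trans cost_S (exp_cost_le_worst _ _ _ _ _ _).
- exact: uniform_on_distr.
- exact: uniform_on_distr.
- by rewrite entropy_uniform_on // card_S natrX log2_expr.
- exact: le_trans (emd_self_le0 _ u_ge0) eta_ge0.
Qed.

Lemma worst_exp_cost_ge_emd : (0 <= h)%R -> (1 <= eta <= n%:R)%R ->
  (log2 (Num.truncn eta)%:R / 8)%:E <= worst_exp_cost A h eta.
Proof.
move=> h_ge0 /andP[eta_ge1 eta_le]; set m := Num.truncn eta; set S : {set 'I_n} := prefix m.
have m_gt0 : (0 < m)%N by rewrite truncn_gt0.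
have m_le_n : (m <= n)%N by rewrite -[X in (_ <= X)%N](natrK (R := R) n) le_truncn.
have card_S : #|S| = m by rewrite card_prefix.
have S_gt0 : (0 < #|S|)%N by rewrite card_S.
have [j jS cost_j] := exists_exp_cost_point_mass_ge A S (uniform_on S) S_gt0.
rewrite card_S in cost_j; apply: le_trans cost_j (exp_cost_le_worst _ _ _ _ _ _).
- exact: point_mass_distr.
- exact: uniform_on_distr.
- by rewrite entropy_point_mass.
- apply: emd_point_mass_uniform_prefix; first by rewrite m_gt0 m_le_n.
    by rewrite inE in jS.
  by rewrite truncn_le (le_trans ler01).
Qed.

Lemma worst_exp_cost_ge1 : (1 < n)%N -> (0 <= h)%R -> (0 <= eta)%R ->
  1 <= worst_exp_cost A h eta.
Proof.
move=> n_gt1 h_ge0 eta_ge0; pose j0 : 'I_n := Ordinal (ltnW n_gt1).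
have [pm_ge0 _] := point_mass_distr j0.
have := exp_cost_point_mass_ge1 A j0 (point_mass j0) n_gt1.
move=> /le_trans; apply; apply: exp_cost_le_worst.
- exact: point_mass_distr.
- exact: point_mass_distr.
- by rewrite entropy_point_mass.
- exact: le_trans (emd_self_le0 _ pm_ge0) eta_ge0.
Qed.

End WorstCase.

Theorem corollary3p3 :
  exists c : R, 0 < c /\
    forall (n : nat) (A : pred_search n) (h eta : R),
      (1 <= n)%N ->
      0 <= h <= log2 n%:R ->
      1 <= eta <= n%:R ->
      ((c * (h + log2 eta))%:E <= worst_exp_cost A h eta)%E.
Proof.
exists (1 / 32)%R; split => // n A h eta n_gt0 h_range eta_range.
have /andP[h_ge0 h_le] := h_range; have /andP[eta_ge1 eta_le] := eta_range.
have eta_ge0 : (0 <= eta)%R := le_trans ler01 eta_ge1.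
have w_h := worst_exp_cost_ge_entropy A h eta n_gt0 h_range eta_ge0.
have w_eta := worst_exp_cost_ge_emd A h eta h_ge0 eta_range.
have /andP[_ h_lt] := truncn_itv h_ge0.
have log_eta := @log2_le_log2_truncn eta eta_ge1.
have log_m_ge0 : 0 <= log2 (Num.truncn eta)%:R by rewrite log2_ge0 // ler1n truncn_gt0.
have [n_le1|n_gt1] := leqP n 1.
  have n1 : n = 1%N by lia.
  rewrite n1 log2_1 in h_le; rewrite n1 in eta_le.
  have eta1 : eta = 1 by lra.
  have -> : h + log2 eta = 0 by rewrite eta1 log2_1; lra.
  by apply: le_trans w_h; rewrite mulr0 lee_fin divr_ge0.
have w_1 := worst_exp_cost_ge1 A h eta n_gt1 h_ge0 eta_ge0.
move: w_h w_eta w_1; case: (worst_exp_cost A h eta) => [w| |] //.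
  by rewrite !lee_fin => w_h w_eta w_1; lra.
by move=> *; rewrite leey.
Qed.
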